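(* Let $B=\begin{pmatrix}g_1&g_2\\-\Phi\overline{g_2}&\overline{g_1}\end{pmatrix}\in\mathrm{GL}(2,\mathbb{Q}[t,t^{-1}])$ with $g_2\neq0$. Then there exists a unique balanced matrix among the matrices $\{B\,g[0]^k : k\in\mathbb{Z}\}$, where $g[0]=\begin{pmatrix}t&0\\0&t^{-1}\end{pmatrix}$.
   Context: For $f\in\mathbb{Q}[t,t^{-1}]$, $\overline{f}(t)=f(t^{-1})$, and $\Phi=1+t^{-1}+t$. For a matrix $B=\begin{pmatrix}g_1&g_2\\-\Phi\overline{g_2}&\overline{g_1}\end{pmatrix}\in\mathrm{GL}(2,\mathbb{Q}[t,t^{-1}])$ with $g_2\neq0$, write $g_1=a_0t^{m_1}+\dots+a_{n_1-m_1}t^{n_1}$ and $g_2=b_0t^{m_2}+\dots+b_{n_2-m_2}t^{n_2}$ with $a_0,a_{n_1-m_1},b_0,b_{n_2-m_2}\neq0$. $B$ is upper-balanced if $m_1=m_2$ and $n_1=n_2+1$, lower-balanced if $m_1=m_2-1$ and $n_1=n_2$, and balanced if it is upper- or lower-balanced. *)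

(* The ring Q[t,t^{-1}] is modelled as the subring of the
   rational function field Q(t) = {fraction {poly rat}} consisting of the
   elements p(t) / t^n. *)
From HB Require Import structures.
From mathcomp Require Import all_boot all_order all_algebra.
From mathcomp Require Import generic_quotient fraction.
Set Implicit Arguments.
Unset Strict Implicit.
Unset Printing Implicit Defensive.
Import Order.TTheory GRing.Theory Num.Theory.
Local Open Scope ring_scope.

Definition Qt : Type := {fraction {poly rat}}.

Definition toQt (p : {poly rat}) : Qt := @FracField.tofrac _ p.

Definition T : Qt := toQt 'X.

Definition cst (c : rat) : Qt := toQt c%:P.

Definition laurent (f : Qt) : Prop :=
  exists (p : {poly rat}) (n : nat), f = toQt p / T ^+ n.

Definition peval_inv (p : {poly rat}) : Qt :=
  \sum_(i < size p) cst p`_i * T ^- i.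

(* The involution t |-> t^{-1} of Q(t) (restricting to f |-> \overline f on
   Q[t,t^{-1}]), computed on a representative numerator/denominator pair. *)
Definition bar (f : Qt) : Qt :=
  let r := repr f in peval_inv (frac r).1 / peval_inv (frac r).2.

Definition Phi : Qt := 1 + T^-1 + T.

Definition lspan (f : Qt) (m n : int) : Prop :=
  m <= n /\ exists a : nat -> rat,
    [/\ a 0%N != 0, a `|n - m|%N != 0 &
        f = \sum_(i < `|n - m|%N.+1) cst (a i) * T ^ (m + (i : nat)%:Z)].

Definition GL2L (M : 'M[Qt]_2) : Prop :=
  (forall i j, laurent (M i j)) /\ M \in unitmx /\
  (forall i j, laurent (invmx M i j)).

Definition Bmat (g1 g2 : Qt) : 'M[Qt]_2 :=
  \matrix_(i < 2, j < 2)
    if i == 0 then (if j == 0 then g1 else g2)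
    else (if j == 0 then - (Phi * bar g2) else bar g1).

Definition g0 : 'M[Qt]_2 :=
  \matrix_(i < 2, j < 2) if i == j then (if i == 0 then T else T^-1) else 0.

(* Balancedness, read off the entries g1 = M 0 0 and g2 = M 0 1. *)
Definition upper_balanced (M : 'M[Qt]_2) : Prop :=
  exists m1 n1 m2 n2, [/\ lspan (M 0 0) m1 n1, lspan (M 0 1) m2 n2,
                          m1 = m2 & n1 = n2 + 1].
Definition lower_balanced (M : 'M[Qt]_2) : Prop :=
  exists m1 n1 m2 n2, [/\ lspan (M 0 0) m1 n1, lspan (M 0 1) m2 n2,
                          m1 = m2 - 1 & n1 = n2].
Definition balanced (M : 'M[Qt]_2) : Prop :=
  upper_balanced M \/ lower_balanced M.

(* Every nonzero Laurent polynomial is uniquely f = P(t) t^m with P(0) <> 0;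
   its span is [m, m + deg P].  Right multiplication by g[0]^k shifts the span
   of g1 by k and that of g2 by -k without changing their lengths, so exactly
   one B g[0]^k is balanced as soon as deg g1 = deg g2 + 1 (degrees of the
   polynomial parts).  This comes from det B = g1 \bar g1 + Phi g2 \bar g2
   being a unit, i.e. a monomial: g \bar g is supported on [-deg g, deg g]
   with nonzero extreme coefficients, Phi g2 \bar g2 likewise on
   [-(deg g2 + 1), deg g2 + 1], and if these half-widths differed the wider
   term would survive at both ends of the sum. *)
From HB Require Import structures.
From mathcomp Require Import all_boot all_order all_algebra.
From mathcomp Require Import generic_quotient fraction.
From mathcomp Require Import zify.
Import Order.TTheory GRing.Theory Num.Theory.
Local Open Scope ring_scope.

Implicit Types (p q P Q : {poly rat}) (f g u v : Qt).

HB.instance Definition _ := GRing.RMorphism.copy toQt (@FracField.tofrac {poly rat}).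
HB.instance Definition _ := GRing.RMorphism.copy cst (toQt \o polyC).

Lemma T_neq0 : T != 0.
Proof. by rewrite tofrac_eq0 polyX_eq0. Qed.

Lemma expTz_neq0 (k : int) : T ^ k != 0.
Proof. exact: expfz_neq0 T_neq0. Qed.

Lemma expTzD (a b : int) : T ^ (a + b) = T ^ a * T ^ b.
Proof. exact: expfzDr T_neq0. Qed.

Lemma toQt_inj : injective toQt.
Proof. by move=> p q /eqP; rewrite tofrac_eq => /eqP. Qed.

Lemma toQt_eq0 p : (toQt p == 0) = (p == 0).
Proof. exact: tofrac_eq0. Qed.

Lemma poly_neq0_coef0 {P} : P`_0 != 0 -> P != 0.
Proof. by apply: contraNneq => ->; rewrite coef0. Qed.

Definition normal_form (f : Qt) (m : int) (P : {poly rat}) : Prop :=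
  f = toQt P * T ^ m /\ P`_0 != 0.

Lemma normal_form_uniq {f m P m' P'} :
  normal_form f m P -> normal_form f m' P' -> m = m' /\ P = P'.
Proof.
wlog le_mm' : m m' P P' / m <= m'.
  move=> W hP hP'; have [le|/ltW le] := lerP m m'; first exact: W hP hP'.
  by have [-> ->] := W _ _ _ _ le hP' hP.
move=> [-> P0] [+ P'0]; have [e ->] : exists e : nat, m' = m + e%:Z.
  by exists `|m' - m|%N; lia.
rewrite expTzD mulrA [_ * T ^ m]mulrC [toQt P' * _]mulrC -!mulrA.
move/(mulfI (expTz_neq0 m)); rewrite -exprnP -rmorphXn -rmorphM => /toQt_inj eP.
move: P0; rewrite eP coefMXn; case: e eP => [|e] eP; last by rewrite eqxx.
by rewrite expr0 mulr1 addr0.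
Qed.

Lemma normal_formM {f g m n P Q} : normal_form f m P -> normal_form g n Q ->
  normal_form (f * g) (m + n) (P * Q).
Proof.
move=> [-> P0] [-> Q0]; split; last by rewrite coef0M mulf_neq0.
by rewrite rmorphM expTzD mulrACA.
Qed.

Lemma normal_form_mulTz {f m P} (k : int) : normal_form f m P ->
  normal_form (f * T ^ k) (m + k) P.
Proof. by move=> [-> P0]; rewrite -mulrA -expTzD. Qed.

Lemma laurent_normal_form {f} : laurent f -> f != 0 -> exists m P, normal_form f m P.
Proof.
move=> [p [n ->]] f0; have p0 : p != 0 by apply: contraNneq f0 => ->; rewrite rmorph0 mul0r.
have [v [P]] := multiplicity_XsubC p 0; rewrite p0 polyC0 subr0 /= => P0 ->.
exists (v%:Z - n%:Z), P; split; last by rewrite -horner_coef0.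
by rewrite rmorphM rmorphXn expTzD -mulrA exprnP -exprnN.
Qed.

Lemma toQt_poly_mulTz k (a : nat -> rat) (m : int) :
  toQt (\poly_(i < k) a i) * T ^ m = \sum_(i < k) cst (a i) * T ^ (m + (i : nat)%:Z).
Proof.
rewrite poly_def rmorph_sum mulr_suml; apply: eq_bigr => i _.
by rewrite -mul_polyC rmorphM rmorphXn expTzD -exprnP mulrAC mulrA.
Qed.

Lemma lspan_normal_form {f m P} : normal_form f m P ->
  forall m' n, lspan f m' n <-> m' = m /\ n = m + ((size P).-1)%:Z.
Proof.
move=> hP m' n; split.
  move=> [le_m'n [a [a0 aN ef]]].
  have hQ : normal_form f m' (\poly_(i < `|n - m'|%N.+1) a i).
    by split; rewrite ?toQt_poly_mulTz // coef_poly.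
  have [em <-] := normal_form_uniq hQ hP; rewrite size_poly_eq //=; lia.
move=> [-> ->]; case: hP => -> P0.
have sP : size P = ((size P).-1).+1 by rewrite prednK // lt0n size_poly_eq0 poly_neq0_coef0.
split; first lia.
have -> : `|(m + ((size P).-1)%:Z - m)%R|%N = (size P).-1 by lia.
exists (fun i => P`_i); split => //.
  by rewrite -lead_coefE lead_coef_eq0 poly_neq0_coef0.
by rewrite -toQt_poly_mulTz -sP coefK.
Qed.

Lemma numden_reprE (f : Qt) :
  f = toQt (frac (repr f)).1 / toQt (frac (repr f)).2.
Proof.
set r := repr f; rewrite -[f]reprK -/r.
have d0 : toQt (frac r).2 != 0 by rewrite toQt_eq0 denom_ratioP.
apply: (mulIf d0); rewrite mulfVK // /toQt; unlock FracField.tofrac.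
rewrite -[_ * _]/(FracField.mul _ _) -FracField.pi_mul; apply/eqmodP.
rewrite /= FracField.equivfE /FracField.mulf.
by rewrite !numden_Ratio ?oner_eq0 ?mulf_neq0 ?oner_eq0 ?denom_ratioP // !mulr1 mulrC.
Qed.

Lemma peval_invE p : peval_inv p = (map_poly cst p).[T^-1].
Proof.
rewrite horner_coef size_map_poly; apply: eq_bigr => i _.
by rewrite coef_map exprVn.
Qed.

Lemma peval_invM p q : peval_inv (p * q) = peval_inv p * peval_inv q.
Proof. by rewrite !peval_invE rmorphM hornerM. Qed.

Lemma peval_invXn n : peval_inv 'X^n = T ^ (- n%:Z).
Proof. by rewrite peval_invE map_polyXn hornerXn exprVn exprnN. Qed.

Definition rev_poly (p : {poly rat}) : {poly rat} :=
  \poly_(i < size p) p`_((size p).-1 - i).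

Lemma coef0_rev_poly p : p != 0 -> (rev_poly p)`_0 = lead_coef p.
Proof. by move=> p0; rewrite coef_poly lt0n size_poly_eq0 p0 subn0 lead_coefE. Qed.

Lemma size_rev_poly p : p`_0 != 0 -> size (rev_poly p) = size p.
Proof. by move=> p0; rewrite size_poly_eq // subnn. Qed.

Lemma peval_inv_rev p : peval_inv p = toQt (rev_poly p) * T ^ (- ((size p).-1)%:Z).
Proof.
rewrite -exprnN; apply: (mulIf (expf_neq0 (size p).-1 T_neq0)).
rewrite divfK ?expf_neq0 ?T_neq0 //.
rewrite /rev_poly poly_def rmorph_sum /peval_inv mulr_suml.
rewrite [RHS](reindex_inj rev_ord_inj); apply: eq_bigr => -[k lt_k] _ /=.
move: lt_k; set s := size p => lt_k.
rewrite -mul_polyC rmorphM rmorphXn -mulrA; congr (_ * _).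
  by have -> : (s.-1 - (s - k.+1))%N = k by lia.
have -> : s.-1 = (k + (s - k.+1))%N by lia.
by rewrite exprD mulKf ?expf_neq0 ?T_neq0.
Qed.

Lemma peval_inv_neq0 p : p != 0 -> peval_inv p != 0.
Proof.
move=> p0; rewrite peval_inv_rev mulf_neq0 ?expTz_neq0 // toQt_eq0.
by apply: poly_neq0_coef0; rewrite coef0_rev_poly // lead_coef_eq0.
Qed.

Lemma bar_frac p q : q != 0 -> bar (toQt p / toQt q) = peval_inv p / peval_inv q.
Proof.
move=> q0; rewrite /bar; set r := repr _.
have er := numden_reprE (toQt p / toQt q); rewrite -/r in er.
have d0 := denom_ratioP r.
have e : p * (frac r).2 = (frac r).1 * q.
  apply: toQt_inj; rewrite !rmorphM; apply/eqP.
  by rewrite -eqr_div ?toQt_eq0 // -er.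
apply/eqP; rewrite eqr_div ?peval_inv_neq0 // -!peval_invM e.
by rewrite [_ * q]mulrC.
Qed.

Lemma bar_normal_form {f m P} : normal_form f m P ->
  normal_form (bar f) (- m - ((size P).-1)%:Z) (rev_poly P).
Proof.
move=> [-> P0]; split; last by rewrite coef0_rev_poly ?lead_coef_eq0 poly_neq0_coef0.
have [a [b ->]] : exists a b : nat, m = a%:Z - b%:Z.
  by case: m => n; [exists n, 0%N | exists 0%N, n.+1]; rewrite ?NegzE; lia.
have -> : toQt P * T ^ (a%:Z - b%:Z) = toQt (P * 'X^a) / toQt 'X^b.
  by rewrite rmorphM !rmorphXn expTzD -exprnN -exprnP mulrA.
rewrite bar_frac ?expf_neq0 ?polyX_eq0 // peval_invM !peval_invXn peval_inv_rev.
by rewrite invr_expz -!mulrA -!expTzD; congr (_ * T ^ _); move: (size P).-1 => d; lia.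
Qed.

Definition centered (f : Qt) (a : nat) : Prop :=
  exists P, normal_form f (- a%:Z) P /\ size P = (a + a).+1.

Lemma centeredM {f g a b} : centered f a -> centered g b -> centered (f * g) (a + b).
Proof.
move=> [P [hP sP]] [Q [hQ sQ]]; exists (P * Q); split.
  by rewrite PoszD opprD; exact: normal_formM hP hQ.
by rewrite size_mul ?poly_neq0_coef0 ?hP.2 ?hQ.2 // sP sQ; lia.
Qed.

Lemma centered_mul_bar {f m P} : normal_form f m P -> centered (f * bar f) (size P).-1.
Proof.
move=> hP; have hbP := bar_normal_form hP.
have P_gt0 : (0 < size P)%N by rewrite lt0n size_poly_eq0 poly_neq0_coef0 ?hP.2.
exists (P * rev_poly P); split.
  by have := normal_formM hP hbP; congr normal_form; move: (size P).-1 => d; lia.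
rewrite size_mul ?poly_neq0_coef0 ?hP.2 ?hbP.2 // size_rev_poly ?hP.2 //.
by move: (size P) P_gt0 => s; lia.
Qed.

Lemma centered_Phi : centered Phi 1.
Proof.
have s2 : size ('X + 1 : {poly rat}) = 2%N by rewrite -polyC1 size_XaddC.
exists ('X^2 + ('X + 1)); split; last by rewrite size_polyDl ?size_polyXn ?s2.
split; last by rewrite !coefD coefXn coefX coef1 add0r oner_neq0.
have -> : toQt ('X^2 + ('X + 1)) = T ^+ 2 + (T + 1) by rewrite !rmorphD rmorphXn rmorph1.
rewrite /Phi exprN1; have := T_neq0; move: T => t t0.
by rewrite !mulrDl expr2 mulfK // divff // mul1r addrC.
Qed.

Lemma centered_add {f g a b} : centered f a -> centered g b -> a != b ->
  centered (f + g) (maxn a b).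
Proof.
wlog lt_ab : f g a b / (a < b)%N.
  move=> W hf hg; rewrite neq_ltn => /orP[lt|lt]; first by apply: W; rewrite ?ltn_eqF.
  by rewrite addrC maxnC; apply: W; rewrite ?ltn_eqF.
move=> [U [[-> U0] sU]] [V [[-> V0] sV]] _; rewrite (maxn_idPr (ltnW lt_ab)).
exists (V + U * 'X^(b - a)); split; first split.
- rewrite rmorphD rmorphM rmorphXn mulrDl addrC -mulrA exprnP -expTzD.
  by rewrite (_ : (b - a)%N%:Z - b%:Z = - a%:Z) //; lia.
- by rewrite coefD coefMXn subn_gt0 lt_ab addr0.
rewrite size_polyDl ?sV // size_mulXn ?poly_neq0_coef0 // sU; lia.
Qed.

Lemma size_normal_form_unit {u v m P} : laurent v -> u * v = 1 -> normal_form u m P ->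
  size P = 1%N.
Proof.
move=> lv uv hP; have v0 : v != 0 by apply: contra_eq_neq uv => ->; rewrite mulr0 eq_sym oner_neq0.
have [n [Q hQ]] := laurent_normal_form lv v0.
have h1 : normal_form (u * v) 0 1.
  by rewrite uv; split; rewrite ?rmorph1 ?expr0z ?mulr1 // coef1 oner_neq0.
have [_ ePQ] := normal_form_uniq (normal_formM hP hQ) h1.
have nzP := poly_neq0_coef0 hP.2; have nzQ := poly_neq0_coef0 hQ.2.
have := size_mul nzP nzQ; rewrite ePQ size_poly1.
by move: nzP nzQ; rewrite -!size_poly_eq0; move: (size P) (size Q) => s t; lia.
Qed.

Lemma centered_unit_eq0 {u v a} : laurent v -> u * v = 1 -> centered u a -> a = 0%N.
Proof. by move=> lv uv [P [hP sP]]; have := size_normal_form_unit lv uv hP; rewrite sP; lia. Qed.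

Lemma unit_det_size_normal_form {g1 g2 v m2 P2} : laurent g1 -> laurent v ->
  (g1 * bar g1 + Phi * (g2 * bar g2)) * v = 1 -> normal_form g2 m2 P2 ->
  exists m1 P1, normal_form g1 m1 P1 /\ size P1 = (size P2).+1.
Proof.
move=> lg1 lv uv hP2.
have P2_gt0 : (0 < size P2)%N by rewrite lt0n size_poly_eq0 poly_neq0_coef0 ?hP2.2.
have c2 : centered (Phi * (g2 * bar g2)) (size P2).
  by have := centeredM centered_Phi (centered_mul_bar hP2); rewrite add1n prednK.
have [g1_0|nz_g1] := eqVneq g1 0.
  move: uv; rewrite g1_0 mul0r add0r => uv.
  by have := centered_unit_eq0 lv uv c2; move: P2_gt0; lia.
have [m1 [P1 hP1]] := laurent_normal_form lg1 nz_g1.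
exists m1, P1; split => //.
have P1_gt0 : (0 < size P1)%N by rewrite lt0n size_poly_eq0 poly_neq0_coef0 ?hP1.2.
have [e|ne] := eqVneq (size P1).-1 (size P2); first by move: (size P1) P1_gt0 e => s; lia.
have := centered_unit_eq0 lv uv (centered_add (centered_mul_bar hP1) c2 ne).
by move: P2_gt0; lia.
Qed.

Lemma laurentM f g : laurent f -> laurent g -> laurent (f * g).
Proof.
move=> [p [a ->]] [q [b ->]]; exists (p * q), (a + b)%N.
by rewrite mulf_div rmorphM exprD.
Qed.

Lemma laurentD f g : laurent f -> laurent g -> laurent (f + g).
Proof.
move=> [p [a ->]] [q [b ->]]; exists (p * 'X^b + q * 'X^a), (a + b)%N.
by rewrite addf_div ?expf_neq0 ?T_neq0 // rmorphD !rmorphM !rmorphXn exprD.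
Qed.

Lemma laurentN f : laurent f -> laurent (- f).
Proof. by move=> [p [a ->]]; exists (- p), a; rewrite rmorphN mulNr. Qed.

Lemma det_mx2 (R : comPzRingType) (A : 'M[R]_2) : \det A = A 0 0 * A 1 1 - A 0 1 * A 1 0.
Proof.
rewrite (expand_det_row _ 0) !big_ord_recl big_ord0 /cofactor !det_mx11 !mxE /=.
have L1 (i : 'I_1) : lift 0 i = 1 :> 'I_2 by apply: val_inj; rewrite /= ord1.
have L0 (i : 'I_1) : lift 1 i = 0 :> 'I_2 by apply: val_inj; rewrite /= ord1.
by rewrite !L1 !L0 /= expr0 expr1 mul1r mulN1r mulrN addr0.
Qed.

Lemma laurent_det2 {A : 'M[Qt]_2} : (forall i j, laurent (A i j)) -> laurent (\det A).
Proof. by move=> lA; rewrite det_mx2; apply: laurentD; [|apply: laurentN]; apply: laurentM. Qed.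

Lemma det_Bmat g1 g2 : \det (Bmat g1 g2) = g1 * bar g1 + Phi * (g2 * bar g2).
Proof. by rewrite det_mx2 !mxE /= mulrN opprK; congr (_ + _); exact: mulrCA. Qed.

Definition diagTz (k : int) : 'M[Qt]_2 :=
  \matrix_(i < 2, j < 2) if i == j then (if i == 0 then T ^ k else T ^ (- k)) else 0.

Lemma diagTzD a b : diagTz a * diagTz b = diagTz (a + b).
Proof.
apply/matrixP => i j; rewrite !mxE !big_ord_recl big_ord0 !mxE.
case: i => [[|[|//]] ?]; case: j => [[|[|//]] ?];
  by rewrite /= ?mulr0 ?mul0r ?addr0 ?add0r ?opprD ?expTzD.
Qed.

Lemma diagTz0 : diagTz 0 = 1.
Proof.
apply/matrixP => i j; rewrite !mxE.
by case: i => [[|[|//]] ?]; case: j => [[|[|//]] ?]; rewrite /= ?oppr0 ?expr0z.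
Qed.

Lemma g0_expz k : g0 ^ k = diagTz k.
Proof.
have g0E : g0 = diagTz 1.
  apply/matrixP => i j; rewrite !mxE.
  by case: i => [[|[|//]] ?]; case: j => [[|[|//]] ?]; rewrite /= ?expr1z ?exprN1.
have g0_expn (n : nat) : g0 ^+ n = diagTz n.
  elim: n => [|n IH]; first by rewrite expr0 diagTz0.
  by rewrite exprS IH g0E diagTzD -PoszD add1n.
case: k => n; first by rewrite -exprnP g0_expn.
have u : diagTz n.+1 \is a GRing.unit.
  by apply/unitrP; exists (diagTz (- n.+1%:Z)); rewrite !diagTzD addNr subrr diagTz0.
by rewrite NegzE -exprnN g0_expn; apply: (mulrI u); rewrite mulrV // diagTzD subrr diagTz0.
Qed.

Lemma mulmx_g0z_00 (A : 'M[Qt]_2) k : (A *m g0 ^ k) 0 0 = A 0 0 * T ^ k.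
Proof. by rewrite g0_expz !mxE !big_ord_recl big_ord0 !mxE /= mulr0 !addr0. Qed.

Lemma mulmx_g0z_01 (A : 'M[Qt]_2) k : (A *m g0 ^ k) 0 1 = A 0 1 * T ^ (- k).
Proof.
rewrite g0_expz !mxE !big_ord_recl big_ord0 !mxE /= mulr0 add0r addr0.
by congr (A _ _ * _); apply: val_inj.
Qed.

Lemma balancedP {M : 'M[Qt]_2} {m1 P1 m2 P2} :
  normal_form (M 0 0) m1 P1 -> normal_form (M 0 1) m2 P2 -> size P1 = (size P2).+1 ->
  balanced M <-> m1 = m2 \/ m1 = m2 - 1.
Proof.
move=> h1 h2 sP; have P2_gt0 : (0 < size P2)%N.
  by rewrite lt0n size_poly_eq0 poly_neq0_coef0 ?h2.2.
move: (lspan_normal_form h1) (lspan_normal_form h2); rewrite sP /= => l1 l2.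
split.
  by case=> -[? [? [? [? [/l1 [-> ->] /l2 [-> ->] ? _]]]]]; [left | right].
case=> e; [left | right];
  exists m1, (m1 + (size P2)%:Z), m2, (m2 + ((size P2).-1)%:Z); split;
  rewrite ?l1 ?l2 //; move: (size P2) P2_gt0 => s; lia.
Qed.

Theorem lemma4p14 (g1 g2 : Qt) :
  laurent g1 -> laurent g2 -> g2 != 0 -> GL2L (Bmat g1 g2) ->
  exists! M : 'M[Qt]_2,
    (exists k : int, M = Bmat g1 g2 *m g0 ^ k) /\ balanced M.
Proof.
move=> lg1 lg2 nz_g2 [_ [uB linvB]].
have [m2 [P2 hP2]] := laurent_normal_form lg2 nz_g2.
have [m1 [P1 [hP1 sP]]] : exists m1 P1, normal_form g1 m1 P1 /\ size P1 = (size P2).+1.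
  apply: (unit_det_size_normal_form lg1 (laurent_det2 linvB) _ hP2).
  by rewrite -det_Bmat -det_mulmx mulmxV // det1.
have balB k : balanced (Bmat g1 g2 *m g0 ^ k) <-> m1 + k = m2 - k \/ m1 + k = m2 - k - 1.
  apply: balancedP sP; rewrite ?mulmx_g0z_00 ?mulmx_g0z_01 !mxE /=;
    [exact: normal_form_mulTz hP1 | exact: normal_form_mulTz hP2].
exists (Bmat g1 g2 *m g0 ^ ((m2 - m1) %/ 2)%Z); split.
  by split; [exists ((m2 - m1) %/ 2)%Z | apply/balB; lia].
by move=> _ [[k ->] /balB bal_k]; have -> : k = ((m2 - m1) %/ 2)%Z by lia.
Qed.
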